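(* Let $k\ge1$ and $u,w\in\mathcal S_\infty$ with $u\le_k w$, $u\ne w$. A maximal chain $u=u_0\lessdot_k u_1\lessdot_k\cdots\lessdot_k u_n=w$ of the interval $[u,w]_k$, with $u_i=u_{i-1}(a_i\,b_i)$, $a_i\le k<b_i$, is the CM-chain of $[u,w]_k$ if and only if it has no inversions.
   Context: $\mathcal S_\infty$ is the group of permutations of $\{1,2,\dots\}$ fixing all but finitely many points; $u(a\,b)$ is $u$ with the entries in positions $a,b$ swapped; $\ell$ is the number of inversions. The $k$-Bruhat order $\le_k$ is the reflexive–transitive closure of covers $u\lessdot_k u(a\,b)$ with $a\le k<b$ and $\ell(u(a\,b))=\ell(u)+1$; $[u,w]_k$ is its interval. CM-chain: if $\ell(w)=\ell(u)+1$ it is the unique chain $u\lessdot_k w$. If $\ell(w)>\ell(u)+1$, there are (known) unique integers $a\le k<b$ such that (I) $u(a)<w(a)$ and $w(a)=\max\{w(j):j\le k,\,u(j)<w(j)\}$, and (II) $u(b)>u(a)\ge w(b)$ and $w(b)=\min\{w(j):j>k,\,u(j)>u(a)\ge w(j)\}$; with $u_1=u(a\,b)$ one has $u\lessdot_k u_1\le_k w$, and the CM-chain of $[u,w]_k$ is $u$ followed by the CM-chain of $[u_1,w]_k$. An inversion of the maximal chain above is a pair $(i,j)$ with $1\le i<j\le n$ such that either $w(a_i)<w(a_j)$, or $w(a_i)=w(a_j)$ and $w(b_i)>w(b_j)$. *)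

From Stdlib Require Import ClassicalEpsilon.
From mathcomp Require Import all_boot.
Set Implicit Arguments. Unset Strict Implicit. Unset Printing Implicit Defensive.

(* A permutation of {1,2,...} is represented by a function nat -> nat;
   position 0 is a dummy, fixed by convention. *)
Definition in_Sinf (u : nat -> nat) : Prop :=
  injective u /\ u 0 = 0 /\ exists N, forall i, N < i -> u i = i.

Definition swap (u : nat -> nat) (a b : nat) : nat -> nat :=
  fun i => if i == a then u b else if i == b then u a else u i.

Definition inv_upto (N : nat) (u : nat -> nat) : nat :=
  \sum_(1 <= j < N.+1) \sum_(1 <= i < j) nat_of_bool (u j < u i).

Definition sbound (u : nat -> nat) : nat :=
  epsilon (inhabits 0) (fun N => forall i, N < i -> u i = i).

(* ell(u): number of inversions of u (correct for u in S_infty) *)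
Definition ell (u : nat -> nat) : nat := inv_upto (sbound u) u.

Definition kstep (k : nat) (u : nat -> nat) (a b : nat) : Prop :=
  [/\ 1 <= a <= k, k < b & ell (swap u a b) = (ell u).+1].

Definition kcover (k : nat) (u v : nat -> nat) : Prop :=
  exists a b, kstep k u a b /\ forall i, v i = swap u a b i.

Inductive kle (k : nat) : (nat -> nat) -> (nat -> nat) -> Prop :=
| kle_refl u w : (forall i, u i = w i) -> kle k u w
| kle_step u v w : kcover k u v -> kle k v w -> kle k u w.

(* the list s = [(a_1,b_1); ...; (a_n,b_n)] describes a maximal chain
   u = u_0 <._k u_1 <._k ... <._k u_n = w with u_i = u_{i-1}(a_i b_i) *)
Fixpoint is_kchain (k : nat) (u : nat -> nat) (s : seq (nat * nat))
  (w : nat -> nat) : Prop :=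
  match s with
  | [::] => forall i, u i = w i
  | (a, b) :: s' => kstep k u a b /\ is_kchain k (swap u a b) s' w
  end.

(* conditions (I) and (II) of the CM-chain construction *)
Definition cm_ab (k : nat) (u w : nat -> nat) (a b : nat) : Prop :=
  (1 <= a <= k /\ k < b) /\
  (* (I) *)
  (u a < w a /\ (forall j, 1 <= j <= k -> u j < w j -> w j <= w a)) /\
  (* (II) *)
  (u a < u b /\ w b <= u a /\
   (forall j, k < j -> u a < u j -> w j <= u a -> w b <= w j)).

Fixpoint is_cm (k : nat) (u w : nat -> nat) (s : seq (nat * nat)) : Prop :=
  match s with
  | [::] => False
  | (a, b) :: s' =>
      if ell w == (ell u).+1 then
        [/\ s' = [::], 1 <= a <= k, k < b & forall i, w i = swap u a b i]
      else
        [/\ (ell u).+1 < ell w, cm_ab k u w a b & is_cm k (swap u a b) w s']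
  end.

(* (i,j), i<j (0-indexed in s), is an inversion of the chain *)
Definition chain_inversion (w : nat -> nat) (s : seq (nat * nat)) (i j : nat) : Prop :=
  let p := nth (0, 0) s i in
  let q := nth (0, 0) s j in
  i < j < size s /\
  (w p.1 < w q.1 \/ (w p.1 = w q.1 /\ w q.2 < w p.2)).

Definition no_inversions (w : nat -> nat) (s : seq (nat * nat)) : Prop :=
  forall i j, ~ chain_inversion w s i j.

(* A k-Bruhat cover u <._k u(a b) has u(a) < u(b) and no position c strictly
   between a and b with u(a) < u(c) < u(b): otherwise the swap would change the
   number of inversions by -1 or by at least 3.  Hence along a chain the entries
   at positions <= k only grow, those at positions > k only shrink, and every
   step (a_i, b_i) really moves both of its entries.

   Once the tail is the
   CM-chain of [u(a b), w]_k, equivalently has no inversions, the first step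
   (a, b) satisfies (I) and (II) exactly when it forms no inversion with a later
   step: (I) makes w(a) the largest of the w(a_i), and the minimality in (II),
   played against the first step of the tail, makes w(b) the smallest of the
   w(b_i) over the steps with a_i = a. *)

From Stdlib Require Import ClassicalEpsilon.
From mathcomp Require Import all_boot zify.
Set Implicit Arguments. Unset Strict Implicit. Unset Printing Implicit Defensive.

Lemma swap_l u a b : swap u a b a = u b.
Proof. by rewrite /swap eqxx. Qed.

Lemma swap_r u a b : a != b -> swap u a b b = u a.
Proof. by rewrite /swap eq_sym => /negbTE ->; rewrite eqxx. Qed.

Lemma swap_id u a b c : c != a -> c != b -> swap u a b c = u c.
Proof. by rewrite /swap => /negbTE -> /negbTE ->. Qed.

Lemma swap_in_Sinf u a b : in_Sinf u -> 0 < a -> 0 < b -> in_Sinf (swap u a b).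
Proof.
case=> inj [u0 [N uN]] a0 b0; split; [|split].
- have swapE x : swap u a b x = u (if x == a then b else if x == b then a else x).
    by rewrite /swap; case: ifP => //; case: ifP.
  move=> x y; rewrite !swapE => /inj.
  by repeat case: eqP; lia.
- by rewrite swap_id ?u0; lia.
- exists (maxn N (maxn a b)) => i iN.
  by rewrite swap_id ?uN; lia.
Qed.

Definition id_beyond (N : nat) (u : nat -> nat) := forall i, N < i -> u i = i.

Lemma sbound_id_beyond u : in_Sinf u -> id_beyond (sbound u) u.
Proof. by case=> _ [_ ex]; exact: (epsilon_spec _ _ ex). Qed.

Lemma id_beyond_le N M u : id_beyond N u -> N <= M -> id_beyond M u.
Proof. by move=> uN NM i Mi; apply: uN; lia. Qed.

Lemma inv_upto_id_beyond N M u :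
  injective u -> id_beyond N u -> N <= M -> inv_upto M u = inv_upto N u.
Proof.
move=> inj uN; elim: M => [|M IH]; first by rewrite leqn0 => /eqP ->.
rewrite leq_eqVlt => /orP [/eqP -> //| NM].
rewrite /inv_upto big_nat_recr //= -/(inv_upto M u) (IH NM) big1_seq ?addn0 // => i.
rewrite mem_index_iota => /andP [_ iM]; have uM := id_beyond_le uN NM.
have uiM : u i <= M by rewrite leqNgt; apply/negP => Mui; have /inj := uM _ Mui; lia.
by rewrite uM //; apply/eqP; rewrite eqb0 -leqNgt ltnW.
Qed.

Lemma ell_inv_upto N u : in_Sinf u -> id_beyond N u -> ell u = inv_upto N u.
Proof.
move=> Su uN; have [inj _] := Su.
rewrite /ell -(inv_upto_id_beyond inj (sbound_id_beyond Su) (leq_maxl _ N)).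
by rewrite (inv_upto_id_beyond inj uN (leq_maxr (sbound u) N)).
Qed.

Lemma ell_ext u w : in_Sinf u -> in_Sinf w -> u =1 w -> ell u = ell w.
Proof.
move=> Su Sw uw; have ww := sbound_id_beyond Sw.
have uw' : id_beyond (sbound w) u by move=> i /ww; rewrite uw.
rewrite (ell_inv_upto Su uw') (ell_inv_upto Sw ww).
by apply: eq_bigr => j _; apply: eq_bigr => i _; rewrite !uw.
Qed.

Lemma bigD1_seq_cond {R : Type} {op : SemiGroup.com_law R} {x : R} {I : eqType}
    {r : seq I} {P : pred I} {j : I} {F : I -> R} :
  uniq r -> j \in r -> P j ->
  \big[op/x]_(i <- r | P i) F i = op (F j) (\big[op/x]_(i <- r | P i && (i != j)) F i).
Proof.
move=> r_uniq jr Pj; rewrite -big_filter (bigD1_seq j) ?filter_uniq ?mem_filter ?Pj //.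
by rewrite big_filter_cond.
Qed.

Lemma bigD2_seq (I : eqType) (r : seq I) (a b : I) (F : I -> nat) :
  uniq r -> a \in r -> b \in r -> a != b ->
  \sum_(i <- r) F i = F a + F b + \sum_(i <- r | (i != a) && (i != b)) F i.
Proof.
move=> r_uniq ar br ab; rewrite (bigD1_seq a) //= -addnA; congr (_ + _).
by rewrite [LHS](bigD1_seq_cond r_uniq br) // eq_sym.
Qed.

Definition inv_pair (u : nat -> nat) (i j : nat) : nat := (i < j) && (u j < u i).

Lemma inv_upto_square N u :
  inv_upto N u = \sum_(j <- iota 1 N) \sum_(i <- iota 1 N) inv_pair u i j.
Proof.
have iotaE : iota 1 N = index_iota 1 N.+1 by rewrite /index_iota subSS subn0.
rewrite /inv_upto iotaE; apply: eq_big_seq => j.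
rewrite mem_index_iota => /andP [j1 /ltnW jN]; rewrite [RHS](big_cat_nat _ (n := j)) /=; [|exact: j1|exact: jN].
rewrite [X in _ = _ + X]big1_seq ?addn0 => [|i]; last first.
  by rewrite mem_index_iota /inv_pair; lia.
by apply: eq_big_seq => i; rewrite mem_index_iota /inv_pair => /andP [_ ->].
Qed.

Definition inv_with (a b c x y z : nat) : nat :=
  (c < a) && (x < z) + (c < b) && (y < z) + (a < c) && (z < x) + (b < c) && (z < y).

Lemma inv_upto_split N u a b : 1 <= a -> a < b -> b <= N ->
  inv_upto N u = (u b < u a)
    + \sum_(c <- iota 1 N | (c != a) && (c != b)) inv_with a b c (u a) (u b) (u c)
    + \sum_(j <- iota 1 N | (j != a) && (j != b))
        \sum_(i <- iota 1 N | (i != a) && (i != b)) inv_pair u i j.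
Proof.
move=> a1 ab bN.
have [r_uniq ar br] : [/\ uniq (iota 1 N), a \in iota 1 N & b \in iota 1 N].
  by rewrite iota_uniq !mem_iota; split=> //; lia.
have a_b : a != b by lia.
have colE j : \sum_(i <- iota 1 N) inv_pair u i j = inv_pair u a j + inv_pair u b j
    + \sum_(i <- iota 1 N | (i != a) && (i != b)) inv_pair u i j.
  exact: bigD2_seq.
rewrite inv_upto_square (bigD2_seq _ r_uniq ar br a_b) !colE.
under [X in _ + X]eq_bigr do rewrite colE.
rewrite /inv_with !big_split /= /inv_pair !ltnn ab /=.
by rewrite (_ : b < a = false); lia.
Qed.

Lemma inv_with_swap_le a b c x y z : a < b -> c != a -> c != b -> z != x -> z != y ->
  x < y -> inv_with a b c x y z <= inv_with a b c y x z.
Proof. rewrite /inv_with; lia. Qed.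

Lemma inv_with_swap_between a b c x y z : a < c < b -> x < z < y ->
  inv_with a b c x y z + 2 <= inv_with a b c y x z.
Proof. rewrite /inv_with; lia. Qed.

Lemma inv_upto_swap_succ N u a b : injective u -> 1 <= a -> a < b -> b <= N ->
  inv_upto N (swap u a b) = (inv_upto N u).+1 ->
  u a < u b /\ forall c, a < c < b -> ~~ (u a < u c < u b).
Proof.
move=> inj a1 ab bN; rewrite !(inv_upto_split _ a1 ab bN).
rewrite swap_l swap_r; last by lia.
have swapE c : (c != a) && (c != b) -> swap u a b c = u c by case/andP; exact: swap_id.
have -> : \sum_(j <- iota 1 N | (j != a) && (j != b))
            \sum_(i <- iota 1 N | (i != a) && (i != b)) inv_pair (swap u a b) i j
        = \sum_(j <- iota 1 N | (j != a) && (j != b))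
            \sum_(i <- iota 1 N | (i != a) && (i != b)) inv_pair u i j.
  by apply: eq_bigr => j Pj; apply: eq_bigr => i Pi; rewrite /inv_pair !swapE.
under eq_bigr => c Pc do rewrite swapE //.
have through_le (P : pred nat) x y : x < y ->
    {subset P <= [pred c | (c != a) && (c != b)]} ->
    (x == u a) && (y == u b) || (x == u b) && (y == u a) ->
    \sum_(c <- iota 1 N | P c) inv_with a b c x y (u c)
    <= \sum_(c <- iota 1 N | P c) inv_with a b c y x (u c).
  move=> xy Pab xy_ab; apply: leq_sum => c /Pab /andP [ca cb].
  have [cx cy] : u c != x /\ u c != y.
    by case/orP: xy_ab => /andP [/eqP -> /eqP ->]; split; apply: contra_neq (@inj _ _) _.
  exact: inv_with_swap_le.
case: (ltngtP (u a) (u b)) => [lt_ab|lt_ba|/inj]; last by lia.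
- move=> hS; split=> // c /andP [ac cb]; apply/negP => /andP [lt_ac lt_cb].
  have [Pc cN] : (c != a) && (c != b) /\ c \in iota 1 N by rewrite mem_iota; lia.
  have gap : inv_with a b c (u a) (u b) (u c) + 2 <= inv_with a b c (u b) (u a) (u c).
    by apply: inv_with_swap_between; apply/andP.
  have rest :
      \sum_(d <- iota 1 N | (d != a) && (d != b) && (d != c)) inv_with a b d (u a) (u b) (u d)
      <= \sum_(d <- iota 1 N | (d != a) && (d != b) && (d != c)) inv_with a b d (u b) (u a) (u d).
    by apply: through_le => [|d /andP []|]; rewrite ?eqxx.
  move: hS; rewrite !(bigD1_seq_cond (iota_uniq 1 N) cN Pc) /=; lia.
- have : \sum_(d <- iota 1 N | (d != a) && (d != b)) inv_with a b d (u b) (u a) (u d)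
      <= \sum_(d <- iota 1 N | (d != a) && (d != b)) inv_with a b d (u a) (u b) (u d).
    by apply: through_le => [|//|]; rewrite ?eqxx ?orbT.
  lia.
Qed.

Section KChain.

Variable k : nat.

Lemma kstep_cover u a b : in_Sinf u -> kstep k u a b ->
  u a < u b /\ forall c, a < c < b -> ~~ (u a < u c < u b).
Proof.
move=> Su [ak kb ell_ab]; have [inj _] := Su.
have uN : id_beyond (maxn (sbound u) b) u.
  exact: id_beyond_le (sbound_id_beyond Su) (leq_maxl _ _).
have vN : id_beyond (maxn (sbound u) b) (swap u a b).
  by move=> i bi; rewrite swap_id ?uN //; lia.
have Sv := swap_in_Sinf Su (a := a) (b := b) ltac:(lia) ltac:(lia).
move: ell_ab; rewrite (ell_inv_upto Su uN) (ell_inv_upto Sv vN).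
by apply: inv_upto_swap_succ; rewrite ?leq_maxr //; lia.
Qed.

Lemma kstep_in_Sinf u a b : in_Sinf u -> kstep k u a b -> in_Sinf (swap u a b).
Proof. by move=> Su [ak kb _]; apply: swap_in_Sinf => //; lia. Qed.

Lemma kstep_left u a b p : in_Sinf u -> kstep k u a b -> p <= k -> u p <= swap u a b p.
Proof.
move=> Su st pk; have [[_ kb _] [lt_ab _]] := (st, kstep_cover Su st).
case: (eqVneq p a) => [->|pa]; first by rewrite swap_l; exact: ltnW.
by rewrite swap_id // ltn_eqF // (leq_ltn_trans pk kb).
Qed.

Lemma kstep_right u a b p : in_Sinf u -> kstep k u a b -> k < p -> swap u a b p <= u p.
Proof.
move=> Su st kp; have [[/andP [_ ak] kb _] [lt_ab _]] := (st, kstep_cover Su st).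
have pa : p != a by rewrite eq_sym ltn_eqF // (leq_ltn_trans ak kp).
case: (eqVneq p b) => [pb|pb]; last by rewrite swap_id.
by subst p; rewrite swap_r ?(ltnW lt_ab) // eq_sym.
Qed.

Variable w : nat -> nat.

Lemma kchain_mem_range u s x : is_kchain k u s w -> x \in s -> 1 <= x.1 <= k /\ k < x.2.
Proof.
elim: s u => [|[a b] s IH] u //= [st ch].
by rewrite in_cons => /orP [/eqP -> | /(IH _ ch) //]; case: st.
Qed.

Lemma kchain_left u s p : in_Sinf u -> is_kchain k u s w -> p <= k -> u p <= w p.
Proof.
elim: s u => [|[a b] s IH] u Su /=; first by move=> uw _; rewrite uw.
move=> [st ch] pk; apply: leq_trans (kstep_left Su st pk) _.
exact: IH (kstep_in_Sinf Su st) ch pk.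
Qed.

Lemma kchain_right u s p : in_Sinf u -> is_kchain k u s w -> k < p -> w p <= u p.
Proof.
elim: s u => [|[a b] s IH] u Su /=; first by move=> uw _; rewrite uw.
move=> [st ch] kp; apply: leq_trans _ (kstep_right Su st kp).
exact: IH (kstep_in_Sinf Su st) ch kp.
Qed.

Lemma kchain_mem_moves u s x : in_Sinf u -> is_kchain k u s w -> x \in s ->
  u x.1 < w x.1 /\ w x.2 < u x.2.
Proof.
elim: s u => [|[a b] s IH] u Su //= [st ch]; have Sv := kstep_in_Sinf Su st.
have [[/andP [_ ak] kb _] [lt_ab _]] := (st, kstep_cover Su st).
rewrite in_cons => /orP [/eqP -> /= | xs].
  have ab : a != b by rewrite ltn_eqF // (leq_ltn_trans ak kb).
  split; first by rewrite -(swap_l u a b) in lt_ab; exact: leq_trans lt_ab (kchain_left Sv ch ak).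
  by rewrite -(swap_r u ab) in lt_ab; exact: leq_ltn_trans (kchain_right Sv ch kb) lt_ab.
have [/andP [_ x1k] kx2] := kchain_mem_range ch xs; have [lt1 lt2] := IH _ Sv ch xs.
split; first exact: leq_ltn_trans (kstep_left Su st x1k) lt1.
exact: leq_trans lt2 (kstep_right Su st kx2).
Qed.

Lemma kchain_untouched u s p : is_kchain k u s w ->
  (forall x, x \in s -> (x.1 != p) && (x.2 != p)) -> w p = u p.
Proof.
elim: s u => [|[a b] s IH] u /=; first by move=> uw _; rewrite uw.
move=> [_ ch] untouched; rewrite (IH _ ch) => [|x xs]; last first.
  by apply: untouched; rewrite in_cons xs orbT.
by have /andP [ap bp] := untouched _ (mem_head _ _); rewrite swap_id // eq_sym.
Qed.

Lemma kchain_right_moved u s q : in_Sinf u -> is_kchain k u s w -> k < q -> w q != u q ->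
  exists2 a, (a, q) \in s & u q <= w a.
Proof.
elim: s u => [|[a b] s IH] u Su /=; first by move=> uw _; rewrite uw eqxx.
move=> [st ch] kq wq; have Sv := kstep_in_Sinf Su st.
have [/andP [_ ak] kb _] := st.
case: (eqVneq b q) => [<-|bq].
  exists a; first exact: mem_head.
  by rewrite -(swap_l u a b); exact: kchain_left Sv ch ak.
have qa : q != a by rewrite eq_sym ltn_eqF // (leq_ltn_trans ak kq).
have uq : swap u a b q = u q by rewrite swap_id // eq_sym.
have [|a' a'q le] := IH _ Sv ch kq; first by rewrite uq.
by exists a'; rewrite ?in_cons ?a'q ?orbT -?uq.
Qed.

Lemma kchain_right_order u s p q : in_Sinf u -> is_kchain k u s w -> k < p -> p < q ->
  u p < u q -> w p < w q.
Proof.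
elim: s u => [|[a b] s IH] u Su /=; first by move=> uw _ _; rewrite !uw.
move=> [st ch] kp pq lt_pq; apply: (IH _ (kstep_in_Sinf Su st) ch kp pq).
have [[/andP [_ ak] kb _] [lt_ab gap]] := (st, kstep_cover Su st).
have [ab pa qa] : [/\ a != b, p != a & q != a] by split; lia.
case: (eqVneq p b) => [pb|pb].
  subst p; have qb : q != b by rewrite eq_sym ltn_eqF.
  by rewrite (swap_r _ ab) (swap_id _ qa qb); exact: ltn_trans lt_ab lt_pq.
case: (eqVneq q b) => [qb|qb]; last by rewrite !swap_id.
subst q; rewrite (swap_id _ pa pb) (swap_r _ ab) ltnNge.
have ne : u p != u a by apply: contra_neq (fun e => proj1 Su _ _ e) pa.
apply: contraNN (gap p _) => [le_pa|]; last by apply/andP; split; lia.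
by apply/andP; split; rewrite // ltn_neqAle eq_sym ne.
Qed.

Lemma kchain_ell u s : in_Sinf u -> in_Sinf w -> is_kchain k u s w -> ell w = ell u + size s.
Proof.
elim: s u => [|[a b] s IH] u Su Sw /=; first by move=> uw; rewrite addn0 (ell_ext Su Sw uw).
move=> [st ch]; rewrite (IH _ (kstep_in_Sinf Su st) Sw ch).
by have [_ _ ->] := st; rewrite addSnnS.
Qed.

End KChain.

Definition step_inversion (w : nat -> nat) (x y : nat * nat) : Prop :=
  w x.1 < w y.1 \/ (w x.1 = w y.1 /\ w y.2 < w x.2).

Lemma no_inversions_cons w x s : no_inversions w (x :: s) <->
  no_inversions w s /\ forall y, y \in s -> ~ step_inversion w x y.
Proof.
split=> [noinv | [noinv xs] [|i] [|j] [/= ij inv] //].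
- split=> [i j [ij inv] | y ys inv]; first exact: (noinv i.+1 j.+1).
  apply: (noinv 0 (index y s).+1); split=> /=; first by rewrite ltnS index_mem.
  by rewrite nth_index.
- by apply: (xs (nth (0, 0) s j)) => //; exact: mem_nth ij.
- exact: (noinv i j).
Qed.

Lemma is_cm_cm_ab k u w a b s : in_Sinf u -> is_kchain k u ((a, b) :: s) w ->
  is_cm k u w ((a, b) :: s) -> cm_ab k u w a b.
Proof.
move=> Su [st _] /=; case: ifP => _ [] // _ ak kb w_ab.
have [lt_ab _] := kstep_cover Su st.
have ab : a != b by lia.
split; first by [].
split; first split.
- by rewrite w_ab swap_l.
- move=> j /andP [_ jk]; rewrite !w_ab.
  case: (eqVneq j a) => [->|ja]; first by rewrite leqnn.
  by rewrite swap_id ?ltnn //; lia.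
split=> //; split; first by rewrite w_ab swap_r.
move=> q kq ua_uq; rewrite !w_ab; case: (eqVneq q b) => [->//|qb].
have qa : q != a by lia.
by rewrite (swap_id _ qa qb); lia.
Qed.

Lemma is_cm_cons k u w a b x s : in_Sinf u -> in_Sinf w ->
  is_kchain k u ((a, b) :: x :: s) w ->
  is_cm k u w ((a, b) :: x :: s) <-> cm_ab k u w a b /\ is_cm k (swap u a b) w (x :: s).
Proof.
move=> Su Sw ch; have /= ell_w := kchain_ell Su Sw ch.
rewrite /= ell_w (_ : _ == _ = false); last by lia.
by split=> [[] | [cm iscm]]; last split; rewrite //; lia.
Qed.

Section CMHead.

Variables (k : nat) (u w : nat -> nat) (a b : nat) (s : seq (nat * nat)).
Hypotheses (Su : in_Sinf u) (w_inj : injective w) (st : kstep k u a b).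
Hypotheses (ch : is_kchain k (swap u a b) s w) (cm_s : is_cm k (swap u a b) w s).
Hypothesis noinv_s : no_inversions w s.

Let Sv : in_Sinf (swap u a b) := kstep_in_Sinf Su st.

Lemma cm_ab_no_step_inversion :
  cm_ab k u w a b -> forall y, y \in s -> ~ step_inversion w (a, b) y.
Proof.
move=> [_ [[_ maxI] [_ [wb_ua minII]]]] [c d] cd_s inv.
have [lt_ab _] := kstep_cover Su st; have [/andP [a1 ak] kb _] := st.
have left_max j y : y \in s -> y.1 = j -> w j <= w a.
  move=> ys <-; have [/andP [? ?] _] := kchain_mem_range ch ys.
  have [lt_y _] := kchain_mem_moves Sv ch ys.
  by apply: maxI; [apply/andP | apply: leq_ltn_trans (kstep_left Su st _) lt_y].
case: inv => /= [|[/w_inj ca lt_db]]; first by have := left_max c _ cd_s erefl; lia.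
subst c; case: s ch cm_s noinv_s cd_s left_max => [//|[a2 b2] s'] ch' cm' noinv' ad_s left_max.
have [_ [[_ maxI2] [lt_v2 _]]] := is_cm_cm_ab Sv ch' cm'.
have a2a : a2 = a.
  apply: w_inj; apply/eqP; rewrite eqn_leq (left_max a2 _ (mem_head _ _)) //=.
  have [lt_va _] := kchain_mem_moves Sv ch' ad_s.
  by apply: maxI2 => //; apply/andP.
subst a2; have ab : a != b by lia.
have b2b : b2 != b.
  by apply: contraTneq lt_v2 => ->; rewrite swap_l (swap_r _ ab) -leqNgt (ltnW lt_ab).
have [_ /= kb2] := kchain_mem_range ch' (mem_head _ _).
have b2a : b2 != a by lia.
move: lt_v2; rewrite swap_l (swap_id _ b2a b2b) => lt_b_b2.
have wb_b2 : w b <= w b2.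
  by case: (leqP (w b2) (u a)) => [|/ltnW]; [apply: minII; lia | exact: leq_trans wb_ua].
have : w b2 <= w d.
  move: ad_s; rewrite in_cons => /orP [/eqP [->] // | ds].
  by have [_ /(_ _ ds)] := (no_inversions_cons w _ _).1 noinv'; rewrite /step_inversion /=; lia.
lia.
Qed.

Hypothesis head_noinv : forall y, y \in s -> ~ step_inversion w (a, b) y.

Lemma head_noinv_le y : y \in s -> w y.1 <= w a /\ (w y.1 = w a -> w b <= w y.2).
Proof. by move/head_noinv; rewrite /step_inversion /=; lia. Qed.

Lemma no_step_inversion_left_max j : 1 <= j <= k -> u j < w j -> w j <= w a.
Proof.
move=> /andP [_ jk] lt_j; case: (eqVneq j a) => [-> //|ja].
have [_ kb _] := st; have jb : j != b by lia.
case: (boolP (has (fun x => (x.1 == j) || (x.2 == j)) s)).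
  case/hasP=> x xs /orP [/eqP xj | /eqP xj]; first by rewrite -xj; have [] := head_noinv_le xs.
  by have [_] := kchain_mem_range ch xs; lia.
move=> /hasPn untouched; move: lt_j; rewrite (kchain_untouched ch) ?swap_id ?ltnn //.
by move=> x /untouched; rewrite negb_or.
Qed.

Lemma no_step_inversion_right_min q :
  k < q -> u a < u q -> w q <= u a -> w b <= w q.
Proof.
move=> kq ua_uq wq_ua; have [[/andP [a1 ak] kb _] [lt_ab gap]] := (st, kstep_cover Su st).
case: (eqVneq q b) => [-> //|qb]; have [ab qa] : a != b /\ q != a by lia.
have vq : swap u a b q = u q by rewrite swap_id.
case: (ltngtP (u q) (u b)) => [lt_qb | lt_bq | /(proj1 Su) eq_qb]; last by rewrite eq_qb eqxx in qb.
  have bq : b < q.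
    rewrite ltn_neqAle eq_sym qb leqNgt; apply/negP => q_b.
    have aqb : a < q < b by lia.
    by move: (gap q aqb); rewrite ua_uq lt_qb.
  by apply: ltnW; apply: kchain_right_order Sv ch kb bq _; rewrite swap_r // vq.
case: s ch cm_s noinv_s head_noinv_le => [//|[a2 b2] s'] ch' cm' noinv' head_le.
have [_ [_ [_ [_ minII2]]]] := is_cm_cm_ab Sv ch' cm'.
case: (eqVneq a2 a) => [a2a | a2a].
  subst a2; have [_ /(_ erefl) /= wb_b2] := head_le _ (mem_head _ _).
  by apply: leq_trans wb_b2 _; apply: minII2; rewrite ?swap_l ?vq //; lia.
(* No later step starts at a (w decreases weakly along the left ends of an
   inversion-free chain), so w a = u b; yet q moved in some step (a', q), which
   requires u q <= w a' <= w a. *)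
have [/= wa2_wa _] := head_le _ (mem_head _ _).
have {}wa2_wa : w a2 < w a.
  by rewrite ltn_neqAle wa2_wa andbT; apply: contra_neq (@w_inj _ _) a2a.
have wa : w a = u b.
  rewrite -(swap_l u a b) (kchain_untouched ch') // => x x_s.
  have [_ kx2] := kchain_mem_range ch' x_s; rewrite (_ : x.2 != a) ?andbT; last by lia.
  move: x_s; rewrite in_cons => /orP [/eqP -> // | xs].
  have [_ head_noinv2] := (no_inversions_cons w _ _).1 noinv'.
  by apply/eqP => xa; apply: (head_noinv2 x xs); left; rewrite /= xa.
have [|a' a'q le_q] := kchain_right_moved Sv ch' kq; first by rewrite vq; lia.
have [/= wa'_wa _] := head_le _ a'q; rewrite vq in le_q; lia.
Qed.

Lemma no_step_inversion_cm_ab : cm_ab k u w a b.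
Proof.
have [[ak kb _] [lt_ab _]] := (st, kstep_cover Su st).
have ab : a != b by lia.
split=> //; split; split=> //.
- apply: leq_trans lt_ab _; rewrite -(swap_l u a b).
  by apply: kchain_left Sv ch _; case/andP: ak.
- exact: no_step_inversion_left_max.
- split; last exact: no_step_inversion_right_min.
  by rewrite -(swap_r u ab); exact: kchain_right Sv ch kb.
Qed.

End CMHead.

Theorem mainTheorem3 (k : nat) (u w : nat -> nat) (s : seq (nat * nat)) :
  1 <= k -> in_Sinf u -> in_Sinf w ->
  kle k u w -> ~ (forall i, u i = w i) ->
  is_kchain k u s w ->
  (is_cm k u w s <-> no_inversions w s).
Proof.
move=> _ Su Sw _; have [w_inj _] := Sw.
elim: s u Su => [|[a b] s IH] u Su u_ne_w ch; first by case: u_ne_w.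
have [st ch_s] : kstep k u a b /\ is_kchain k (swap u a b) s w := ch.
have Sv := kstep_in_Sinf Su st.
have ell_w := kchain_ell Sv Sw ch_s.
case: s IH ch ch_s ell_w => [|x s] IH ch ch_s ell_w.
  have [[ak kb ell_ab] uw] := (st, ch_s).
  rewrite /= ell_w ell_ab addn0 eqxx; split=> _; last by split=> // i; rewrite uw.
  by move=> i j [/andP [ij j1] _]; rewrite /= in j1; lia.
have v_ne_w : ~ (swap u a b =1 w) by move=> /(ell_ext Sv Sw); rewrite ell_w /=; lia.
have IHv := IH _ Sv v_ne_w ch_s.
rewrite is_cm_cons // no_inversions_cons.
split=> [[cm cm_s] | [noinv_s head_noinv]].
  have noinv_s := IHv.1 cm_s; split=> //.
  exact: cm_ab_no_step_inversion Su w_inj st ch_s cm_s noinv_s cm.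
have cm_s := IHv.2 noinv_s; split=> //.
exact: no_step_inversion_cm_ab Su w_inj st ch_s cm_s noinv_s head_noinv.
Qed.
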